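(* Let $G$ be a graph and let $c_1,\ldots,c_m$ be proper colorings of $G$. For any choice of positive integers $d_1,\ldots,d_m$ with $d_1+\cdots+d_m=\operatorname{ind}(\operatorname{Hom}(K_2,G))$, there exists a complete bipartite subgraph of $G$ that, for each $i\in[m]$, contains a subgraph isomorphic to $K_{\lceil d_i/2\rceil+1,\lfloor d_i/2\rfloor+1}$ which is colorful with respect to $c_i$ (i.e., whose vertices receive pairwise distinct colors under $c_i$).
   Context: For a graph $G=(V,E)$, $\operatorname{Hom}(K_2,G)$ is the poset whose elements are the pairs $(A,B)$ of non-empty disjoint subsets of $V$ such that every vertex of $A$ is adjacent to every vertex of $B$, ordered by $(A,B)\preceq(A',B')$ iff $A\subseteq A'$ and $B\subseteq B'$; it is identified with its order complex (vertices are poset elements, simplices are chains), which carries the free $\mathbb{Z}_2$-action $(A,B)\mapsto(B,A)$. The $\mathbb{Z}_2$-index $\operatorname{ind}(\mathsf{K})$ of a free simplicial $\mathbb{Z}_2$-complex $\mathsf{K}$ is the minimal $d$ such that there is a continuous map from $\mathsf{K}$ to $\mathcal{S}^d$ commuting with the $\mathbb{Z}_2$-actions (antipodal map on $\mathcal{S}^d$). *)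

From HB Require Import structures.
From mathcomp Require Import all_boot all_order all_algebra.
From mathcomp Require Import all_classical all_reals all_analysis.
From mathcomp Require Import Rstruct Rstruct_topology.
From Stdlib Require Import Rdefinitions.
Set Implicit Arguments. Unset Strict Implicit. Unset Printing Implicit Defensive.
Import Order.TTheory GRing.Theory Num.Theory.
Local Open Scope classical_set_scope.
Local Open Scope ring_scope.

Definition simple_graph (V : finType) (e : rel V) : Prop :=
  symmetric e /\ irreflexive e.

(* Candidate elements of Hom(K_2,G): pairs of vertex subsets. *)
Definition pairT (V : finType) : finType := ({set V} * {set V})%type.

Definition in_Hom (V : finType) (e : rel V) (p : pairT V) : bool :=
  [&& p.1 != finset.set0, p.2 != finset.set0, [disjoint p.1 & p.2] &
      [forall a in p.1, forall b in p.2, e a b]].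

Definition hom_le (V : finType) (p q : pairT V) : bool :=
  (p.1 \subset q.1) && (p.2 \subset q.2).

Definition hom_swap (V : finType) (p : pairT V) : pairT V := (p.2, p.1).

Definition NP (V : finType) : nat := #|pairT V|.

Definition coord (V : finType) (x : 'rV[R]_(NP V)) (p : pairT V) : R :=
  x ord0 (enum_rank p).

(* Geometric realization of the order complex of Hom(K_2,G), inside R^{NP V}:
   points are convex combinations (barycentric coordinates) of poset elements
   whose support is a chain. *)
Definition hom_realization (V : finType) (e : rel V) : set 'rV[R]_(NP V) :=
  [set x | (forall p, 0 <= coord x p)
         /\ (forall p, ~~ in_Hom e p -> coord x p = 0)
         /\ (\sum_(p : pairT V) coord x p = 1)
         /\ (forall p q, coord x p != 0 -> coord x q != 0 ->
               hom_le p q || hom_le q p)].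

Definition swap_pt (V : finType) (x : 'rV[R]_(NP V)) : 'rV[R]_(NP V) :=
  \row_(i < NP V) coord x (hom_swap (enum_val i)).

Definition sphere (d : nat) : set 'rV[R]_(d.+1) :=
  [set v | \sum_(i < d.+1) v ord0 i ^+ 2 = 1].

Definition Z2_map_exists (V : finType) (e : rel V) (d : nat) : Prop :=
  exists f : 'rV[R]_(NP V) -> 'rV[R]_(d.+1),
    {within hom_realization e, continuous f}
    /\ (forall x, hom_realization e x -> @sphere d (f x))
    /\ (forall x, hom_realization e x -> f (swap_pt x) = - f x).

Definition is_Z2_index_Hom (V : finType) (e : rel V) (n : nat) : Prop :=
  Z2_map_exists e n /\ (forall d, Z2_map_exists e d -> leq n d).

Definition proper_coloring (V : finType) (e : rel V) (c : V -> nat) : Prop :=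
  forall x y, e x y -> c x <> c y.

Definition complete_bipartite (V : finType) (e : rel V) (A B : {set V}) : Prop :=
  A :&: B = finset.set0 /\ (forall a b, a \in A -> b \in B -> e a b).

(* The complete bipartite graph on sides (A,B) contains a subgraph isomorphic to
   K_{p,q} colorful w.r.t. c: sides A' of A and B' of B with sizes {p,q}
   (in either orientation) on which c is injective. *)
Definition contains_colorful_Kpq (V : finType) (A B : {set V}) (p q : nat)
    (c : V -> nat) : Prop :=
  exists A' B' : {set V}, A' \subset A /\ B' \subset B /\
    ((#|A'| = p /\ #|B'| = q) \/ (#|A'| = q /\ #|B'| = p)) /\
    {in A' :|: B' &, injective c}.

From Pilot Require Import Defs.
From mathcomp Require Import all_boot all_order all_algebra.
From mathcomp Require Import all_classical all_reals all_analysis.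
From mathcomp Require Import Rstruct Rstruct_topology.
From Stdlib Require Import Rdefinitions.
From mathcomp Require Import zify.
From mathcomp Require Import fintype finset.
Import Defs.
Import Order.TTheory GRing.Theory Num.Theory.
Set Implicit Arguments. Unset Strict Implicit. Unset Printing Implicit Defensive.

(* Suppose no complete bipartite subgraph works. Then every element (A,B) of
   Hom(K_2,G) has a colouring c_i whose level l_i(A,B) is at most d_i, where
   l(s,t) = 2s-1 if s = t and 2 min(s,t) otherwise, s and t being the numbers
   of c_i-colours on A and B. Index the coordinates of R^n by the pairs (i,j)
   with j < d_i and send (A,B) to the vector with entry +-1 at (i, l_i(A,B)-1)
   for every i with l_i(A,B) <= d_i, the sign telling which side carries more
   colours. Extending linearly over chains gives a continuous odd map from
   |Hom(K_2,G)| to R^n. It does not vanish: if q is the top of a chain and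
   l_i(q) <= d_i, the chain elements at the level of q all have the sign of q.
   Normalising gives a Z_2-map to S^(n-1), contradicting ind = n. *)

Section ColorSets.
Variable V : finType.
Implicit Types (c : V -> nat) (A : {set V}).

Definition color_bound c : nat := (\max_(v : V) c v).+1.

Definition color_ord c (a : V) : 'I_(color_bound c) := inord (c a).

Definition colors c A : {set 'I_(color_bound c)} := color_ord c @: A.

Lemma color_ordE c a : color_ord c a = c a :> nat.
Proof. by rewrite inordK // ltnS (leq_bigmax a). Qed.

Lemma color_ord_inj c a b : color_ord c a = color_ord c b -> c a = c b.
Proof. by move/(congr1 (@nat_of_ord _)); rewrite !color_ordE. Qed.

Lemma card_colors_gt0 c A : (0 < #|colors c A|) = (A != set0).
Proof. by rewrite card_gt0 imset_eq0. Qed.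

Lemma colorsS c (A B : {set V}) : A \subset B -> colors c A \subset colors c B.
Proof. exact: imsetS. Qed.

Lemma card_colors_rainbow c A : {in A &, injective c} -> #|colors c A| = #|A|.
Proof.
by move=> injc; rewrite card_in_imset // => a b Aa Ab /color_ord_inj/injc->.
Qed.

Lemma rainbow_subset c A k : k <= #|colors c A| ->
  exists A', [/\ A' \subset A, #|A'| = k & {in A' &, injective c}].
Proof.
elim: k => [|k IHk] lt_k.
  by exists set0; rewrite sub0set cards0; split=> // a b; rewrite inE.
have [A' [sA'A cardA' injA']] := IHk (ltnW lt_k).
have /subsetPn[_ /imsetP[a Aa ->] newa] : ~~ (colors c A \subset colors c A').
  apply: contraTN lt_k => /subset_leq_card.
  by rewrite (card_colors_rainbow injA') cardA' -ltnNge.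
have A'a : a \notin A' by apply: contra newa => A'a; apply: imset_f.
exists (a |: A'); split; first by rewrite subUset sub1set Aa.
  by rewrite cardsU1 A'a cardA'.
have fresh b : b \in A' -> c b <> c a.
  by move=> A'b cba; case/imsetP: newa; exists b; rewrite // /color_ord cba.
move=> x y; rewrite !inE => /predU1P[-> | A'x] /predU1P[-> | A'y] //.
- by move/esym/(fresh _ A'y).
- by move/(fresh _ A'x).
- exact: injA'.
Qed.

End ColorSets.

(* [d < level s t] iff K_{ceil(d/2)+1, floor(d/2)+1} fits rainbow-coloured into
   sides carrying [s] and [t] colours. *)
Definition level (s t : nat) : nat := if s == t then s.*2.-1 else (minn s t).*2.

Lemma level_gt0 s t : 0 < s -> 0 < t -> 0 < level s t.
Proof. by rewrite /level; case: eqP; lia. Qed.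

Lemma ltn_level d s t : d < level s t ->
  (uphalf d < s /\ d./2 < t) \/ (d./2 < s /\ uphalf d < t).
Proof.
have := uphalf_half d; have := odd_double_half d; have := leq_b1 (odd d).
by rewrite /level; case: eqP; lia.
Qed.

Definition color_level (V : finType) (c : V -> nat) (p : pairT V) : nat :=
  level #|colors c p.1| #|colors c p.2|.

Section HomElements.
Variables (V : finType) (e : rel V).

Lemma in_HomP (p : pairT V) :
  reflect [/\ p.1 != set0, p.2 != set0, [disjoint p.1 & p.2]
            & {in p.1 & p.2, forall a b, e a b}]
          (in_Hom e p).
Proof.
apply: (iffP and4P) => [[-> -> -> /forall_inP eAB] | [-> -> -> eAB]].
  by split=> // a b /eAB /forall_inP; apply.
by split=> //; apply/forall_inP => a /eAB eaB; apply/forall_inP.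
Qed.

Lemma complete_bipartite_Hom p : in_Hom e p -> complete_bipartite e p.1 p.2.
Proof. by case/in_HomP=> _ _ /disjoint_setI0. Qed.

Lemma color_level_gt0 c p : in_Hom e p -> 0 < color_level c p.
Proof. by case/in_HomP=> A0 B0 _ _; rewrite level_gt0 ?card_colors_gt0. Qed.

Section ProperColoring.
Variables (c : V -> nat) (proper_c : proper_coloring e c).

Lemma colors_Hom_disjoint p :
  in_Hom e p -> [disjoint colors c p.1 & colors c p.2].
Proof.
case/in_HomP=> _ _ _ eAB; apply/pred0P => o /=.
apply/negP => /andP[/imsetP[a Aa ->] /imsetP[b Bb /color_ord_inj]].
exact: proper_c (eAB a b Aa Bb).
Qed.

Lemma colors_Hom_neq p : in_Hom e p -> colors c p.1 != colors c p.2.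
Proof.
move=> Hp; have /in_HomP[A0 _ _ _] := Hp.
apply: contraTneq (colors_Hom_disjoint Hp) => <-.
apply/negP => /disjoint_setI0; rewrite setIid => /eqP.
by rewrite imset_eq0 (negPf A0).
Qed.

Lemma rainbow_Hom_subsets p P Q : in_Hom e p ->
    P <= #|colors c p.1| -> Q <= #|colors c p.2| ->
  exists A' B' : {set V},
    [/\ A' \subset p.1, B' \subset p.2, #|A'| = P, #|B'| = Q
       & {in A' :|: B' &, injective c}].
Proof.
case/in_HomP=> _ _ _ eAB /rainbow_subset[A' [sA'A <- injA']].
case/rainbow_subset=> B' [sB'B <- injB']; exists A', B'; split=> //.
have cross a b : a \in A' -> b \in B' -> c a <> c b.
  move=> A'a B'b; apply/proper_c/eAB.
  - exact: (subsetP sA'A).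
  - exact: (subsetP sB'B).
move=> x y; rewrite !inE => /orP[A'x | B'x] /orP[A'y | B'y].
- exact: injA'.
- by move/(cross _ _ A'x B'y).
- by move/esym/(cross _ _ A'y B'x).
- exact: injB'.
Qed.

Lemma colorful_Kpq_of_level p d : in_Hom e p -> d < color_level c p ->
  contains_colorful_Kpq p.1 p.2 (uphalf d).+1 (d./2).+1 c.
Proof.
move=> Hp /ltn_level[[ltA ltB] | [ltA ltB]].
- have [A' [B' [? ? ? ? ?]]] := rainbow_Hom_subsets Hp ltA ltB.
  by exists A', B'; do 3!split=> //; left.
- have [A' [B' [? ? ? ? ?]]] := rainbow_Hom_subsets Hp ltA ltB.
  by exists A', B'; do 3!split=> //; right.
Qed.

End ProperColoring.
End HomElements.

Section Orientation.
Local Open Scope ring_scope.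

Definition cmp_sign (a b : nat) : R :=
  if (a < b)%nat then -1 else if (b < a)%nat then 1 else 0.

Lemma cmp_signC a b : cmp_sign b a = - cmp_sign a b.
Proof. by rewrite /cmp_sign; case: ssrnat.ltngtP; rewrite ?opprK ?oppr0. Qed.

Lemma cmp_sign_sqr a b : a != b -> cmp_sign a b ^+ 2 = 1.
Proof. by rewrite /cmp_sign; case: ssrnat.ltngtP; rewrite ?sqrrN ?expr1n. Qed.

Lemma level_eq_le s t s' t' : (0 < s)%nat -> (0 < t)%nat ->
  (s <= s')%nat -> (t <= t')%nat -> level s t = level s' t' ->
  [/\ (s' == t') = (s == t), s == t -> s' = s /\ t' = t
    & cmp_sign s t = cmp_sign s' t'].
Proof.
rewrite /level /cmp_sign => s0 t0 ss' tt'.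
case: (s =P t) => [est | nst]; case: (s' =P t') => [est' | nst'] eql; try lia.
  by rewrite est est' !ltnn; split=> // _; lia.
have -> : (s < t)%nat = (s' < t')%nat by apply/idP/idP; lia.
have -> : (t < s)%nat = (t' < s')%nat by apply/idP/idP; lia.
by split.
Qed.

Variables (V : finType) (e : rel V) (c : V -> nat).

(* Ties in the number of colours are broken by a fixed enumeration of colour
   sets; this is a genuine tie-break because the two colour sets of an element
   of Hom(K_2,G) are disjoint, hence distinct. *)
Definition orientation (p : pairT V) : R :=
  let S := colors c p.1 in let T := colors c p.2 in
  if #|S| == #|T| then cmp_sign (enum_rank S) (enum_rank T)
  else cmp_sign #|S| #|T|.

Definition level_coord (j : nat) (p : pairT V) : R :=
  if color_level c p == j.+1 then orientation p else 0.

Lemma level_coord_swap j p : level_coord j (hom_swap p) = - level_coord j p.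
Proof.
rewrite /level_coord /color_level /orientation /=.
move: #|colors c p.1| #|colors c p.2| => s t.
rewrite /level minnC [t == s]eq_sym.
by case: (s =P t) => [-> | _]; case: ifP => _; rewrite ?oppr0 // cmp_signC.
Qed.

Lemma orientation_sqr p : proper_coloring e c -> in_Hom e p ->
  orientation p ^+ 2 = 1.
Proof.
move=> proper_c Hp; rewrite /orientation.
case: eqP => [_ | neST]; apply: cmp_sign_sqr; last exact/eqP.
by rewrite (inj_eq val_inj) (inj_eq enum_rank_inj) (colors_Hom_neq proper_c Hp).
Qed.

Lemma orientation_le p q : in_Hom e p -> hom_le p q ->
  color_level c p = color_level c q -> orientation p = orientation q.
Proof.
case/in_HomP=> A0 B0 _ _ /andP[/(colorsS c) sS /(colorsS c) sT].
rewrite -(card_colors_gt0 c) in A0; rewrite -(card_colors_gt0 c) in B0.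
move/(level_eq_le A0 B0 (subset_leq_card sS) (subset_leq_card sT)).
case=> eqq eqST eqcmp; rewrite /orientation eqq.
case: ifP => [/eqST[eS eT] | _]; last exact: eqcmp.
have [-> ->] : colors c p.1 = colors c q.1 /\ colors c p.2 = colors c q.2.
  by split; apply/eqP; rewrite eqEcard ?sS ?sT ?eS ?eT /=.
by [].
Qed.

Lemma sum_level_coord_neq0 (w : pairT V -> R) q :
  proper_coloring e c -> in_Hom e q -> 0 < w q -> (forall p, 0 <= w p) ->
  (forall p, w p != 0 -> in_Hom e p /\ hom_le p q) ->
  \sum_p w p * level_coord (color_level c q).-1 p != 0.
Proof.
move=> proper_c Hq wq_gt0 w_ge0 supp_le.
have levelq : (color_level c q).-1.+1 = color_level c q.
  by rewrite prednK // (color_level_gt0 c Hq).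
have oq2 := orientation_sqr proper_c Hq.
(* Weighted by the orientation of [q], every summand is nonnegative. *)
suff : 0 < orientation q * \sum_p w p * level_coord (color_level c q).-1 p.
  by apply: contraTneq => ->; rewrite mulr0 ltxx.
rewrite mulr_sumr (bigD1 q) //= {1}/level_coord levelq eqxx.
rewrite mulrCA -expr2 oq2 mulr1; apply: (lt_le_trans wq_gt0).
rewrite lerDl; apply: sumr_ge0 => p _; rewrite mulrCA.
have [-> | wp0] := eqVneq (w p) 0; first by rewrite mul0r.
have [Hp le_pq] := supp_le p wp0; apply: mulr_ge0 => //.
rewrite /level_coord levelq; case: eqP => [eq_level | _]; last by rewrite mulr0.
by rewrite (orientation_le Hp le_pq eq_level) -expr2 oq2.
Qed.

End Orientation.

Section Continuity.
Local Open Scope ring_scope.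

Lemma row_continuous (T : topologicalType) n (F : 'I_n -> T -> R) :
  (forall i, continuous (F i)) -> continuous (fun x => \row_i F i x).
Proof.
move=> F_cont x; apply/cvg_ballP => eps eps_gt0.
have : \forall y \near x, forall i, ball (F i x) eps (F i y).
  by apply: filter_forall => i; move/cvg_ballP: (F_cont i x); apply.
by apply: filterS => y near_y; split=> // i j; rewrite !mxE.
Qed.

Lemma sum_continuous (T : topologicalType) (I : Type) (r : seq I)
    (F : I -> T -> R) :
  (forall i, continuous (F i)) -> continuous (fun x => \sum_(i <- r) F i x).
Proof.
by move=> F_cont; apply: (continuous_big (@add_continuous R^o)) => i _.
Qed.

End Continuity.

Section SphereProjection.
Local Open Scope ring_scope.
Context {K : nat}.
Implicit Type v : 'rV[R]_K.+1.

Definition sqnorm v : R := \sum_i v ord0 i ^+ 2.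

Definition sphere_proj v : 'rV[R]_K.+1 := (Num.sqrt (sqnorm v))^-1 *: v.

Lemma sqnorm_gt0 v : v != 0 -> 0 < sqnorm v.
Proof.
move=> v_neq0; rewrite lt_def sumr_ge0 ?andbT => [|i _]; last exact: sqr_ge0.
apply: contra v_neq0; rewrite psumr_eq0 => [/allP v0|i _]; last exact: sqr_ge0.
apply/eqP/rowP => j; rewrite ord1 mxE; apply/eqP; rewrite -sqrf_eq0.
exact: v0 j (mem_index_enum j).
Qed.

Lemma sqnormN v : sqnorm (- v) = sqnorm v.
Proof. by apply: eq_bigr => i _; rewrite mxE sqrrN. Qed.

Lemma sphere_proj_sphere v : v != 0 -> @sphere K (sphere_proj v).
Proof.
move=> /sqnorm_gt0 v_gt0; rewrite /sphere /= -[RHS](mulVf (lt0r_neq0 v_gt0)).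
rewrite -[in X in X * _](sqr_sqrtr (ltW v_gt0)) -exprVn mulr_sumr.
by apply: eq_bigr => i _; rewrite mxE exprMn.
Qed.

Lemma sphere_projN v : sphere_proj (- v) = - sphere_proj v.
Proof. by rewrite /sphere_proj sqnormN scalerN. Qed.

Lemma sqnorm_continuous : continuous sqnorm.
Proof.
apply: sum_continuous => i v.
exact: continuous_comp (@coord_continuous R _ _ ord0 i v)
  (@exprn_continuous R 2 _).
Qed.

Lemma sphere_proj_continuous v : v != 0 -> {for v, continuous sphere_proj}.
Proof.
move=> /sqnorm_gt0 v_gt0; apply: continuousZ; last exact: cvg_id.
apply: continuousV; first by rewrite sqrtr_eq0 -ltNge.
by apply: continuous_comp; [exact: sqnorm_continuous | exact: sqrt_continuous].
Qed.

End SphereProjection.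

Section Realization.
Local Open Scope ring_scope.
Variables (V : finType) (e : rel V).

Lemma coord_swap_pt (x : 'rV[R]_(NP V)) p :
  coord (swap_pt x) p = coord x (hom_swap p).
Proof. by rewrite /coord mxE enum_rankK. Qed.

Definition linear_ext K (F : 'I_K -> pairT V -> R) (x : 'rV[R]_(NP V)) :
  'rV[R]_K := \row_k \sum_p coord x p * F k p.

Lemma linear_ext_continuous K (F : 'I_K -> pairT V -> R) :
  continuous (linear_ext F).
Proof.
apply: row_continuous => k; apply: sum_continuous => p x.
by apply: continuousM; [exact: coord_continuous | exact: cst_continuous].
Qed.

Lemma linear_ext_swap K (F : 'I_K -> pairT V -> R) x :
  (forall k p, F k (hom_swap p) = - F k p) ->
  linear_ext F (swap_pt x) = - linear_ext F x.
Proof.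
have swapK : involutive (@hom_swap V) by case.
move=> F_odd; apply/rowP => k.
rewrite !mxE -sumrN (reindex_inj (inv_inj swapK)).
by apply: eq_bigr => p _; rewrite coord_swap_pt swapK F_odd mulrN.
Qed.

Lemma realization_top x : hom_realization e x ->
  exists q, [/\ in_Hom e q, 0 < coord x q
              & forall p, coord x p != 0 -> in_Hom e p /\ hom_le p q].
Proof.
case=> x_ge0 [x_Hom [x_sum1 x_chain]].
have supp_Hom p : coord x p != 0 -> in_Hom e p.
  by apply: contraNT => /x_Hom ->.
have [p0 p0_supp | supp0] := pickP (fun p => coord x p != 0); last first.
  move: x_sum1; rewrite big1 => [/esym/eqP | p _]; first by rewrite oner_eq0.
  exact/eqP/negbFE/supp0.
case: (@arg_maxnP _ p0 (fun p => coord x p != 0) (fun p => #|p.1| + #|p.2|)%nat)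
  => // q q_supp q_max.
exists q; split; first exact: supp_Hom.
  by rewrite lt_def q_supp x_ge0.
move=> p p_supp; split; first exact: supp_Hom.
case/orP: (x_chain p q p_supp q_supp) => // /andP[s1 s2].
have le1 : (#|p.1| <= #|q.1|)%nat.
  rewrite -(leq_add2r #|p.2|); apply: leq_trans (q_max p p_supp) _.
  by rewrite leq_add2l subset_leq_card.
have le2 : (#|p.2| <= #|q.2|)%nat.
  rewrite -(leq_add2l #|p.1|); apply: leq_trans (q_max p p_supp) _.
  by rewrite leq_add2r subset_leq_card.
rewrite /hom_le; have /eqP <- : q.1 == p.1 by rewrite eqEcard s1.
have /eqP <- : q.2 == p.2 by rewrite eqEcard s2.
by rewrite !subxx.
Qed.

Lemma Z2_map_exists_of_odd K (g : 'rV[R]_(NP V) -> 'rV[R]_K.+1) :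
  continuous g -> (forall x, hom_realization e x -> g x != 0) ->
  (forall x, hom_realization e x -> g (swap_pt x) = - g x) ->
  Z2_map_exists e K.
Proof.
move=> g_cont g_neq0 g_odd; exists (sphere_proj \o g); split; [|split].
- apply: continuous_in_subspaceT => x /set_mem Hx.
  apply: continuous_comp; first exact: g_cont.
  exact: sphere_proj_continuous (g_neq0 x Hx).
- by move=> x Hx; exact: sphere_proj_sphere (g_neq0 x Hx).
- by move=> x Hx /=; rewrite g_odd // sphere_projN.
Qed.

End Realization.

Lemma Z2_map_exists_of_small_levels (V : finType) (e : rel V) (m : nat)
    (c : 'I_m -> V -> nat) (ds : 'I_m -> nat) (K : nat) :
  (forall i, proper_coloring e (c i)) ->
  (forall q, in_Hom e q -> exists i, color_level (c i) q <= ds i) ->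
  \sum_(i < m) ds i = K.+1 -> Z2_map_exists e K.
Proof.
move=> proper_c small_level sum_ds; pose I := {i : 'I_m & 'I_(ds i)}.
have card_I : #|{: I}| = K.+1.
  rewrite card_tagged sumnE big_map big_enum -sum_ds /=.
  by apply: eq_bigr => i _; rewrite card_ord.
pose index k : I := enum_val (cast_ord (esym card_I) k).
pose F k := level_coord (c (tag (index k))) (tagged (index k)).
apply: (@Z2_map_exists_of_odd _ _ _ (linear_ext F)).
- exact: linear_ext_continuous.
- move=> x hx; have [q [Hq xq_gt0 supp_le]] := realization_top hx.
  have [i level_le] := small_level q Hq.
  have lt_level : (color_level (c i) q).-1 < ds i.
    by rewrite prednK // (color_level_gt0 _ Hq).
  pose j := Tagged (fun i => 'I_(ds i)) (Ordinal lt_level).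
  pose k := cast_ord card_I (enum_rank j).
  apply: contra_neq (sum_level_coord_neq0 (proper_c i) Hq xq_gt0 _ supp_le).
    by move/rowP/(_ k); rewrite !mxE /F /index cast_ordK enum_rankK.
  by case: hx.
- by move=> x _; apply: linear_ext_swap => k p; exact: level_coord_swap.
Qed.

Theorem theorem3p3 (V : finType) (e : rel V) (m : nat)
    (c : 'I_m -> V -> nat) (ds : 'I_m -> nat) (n : nat) :
  simple_graph e ->
  (forall i, proper_coloring e (c i)) ->
  is_Z2_index_Hom e n ->
  (forall i, (0 < ds i)%N) ->
  (\sum_(i < m) ds i)%N = n ->
  exists A B : {set V}, complete_bipartite e A B /\
    forall i : 'I_m,
      contains_colorful_Kpq A B (uphalf (ds i)).+1 (ds i)./2.+1 (c i).
Proof.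
move=> _ proper_c [_ index_min] ds_gt0 sum_ds.
apply: contrapT => no_colorful.
have small_level q : in_Hom e q -> exists i, color_level (c i) q <= ds i.
  move=> Hq; apply: contrapT => big_level; apply: no_colorful.
  exists q.1, q.2; split=> [|i]; first exact: complete_bipartite_Hom.
  apply: colorful_Kpq_of_level => //; rewrite ltnNge.
  by apply/negP => le_level; apply: big_level; exists i.
case: n => [|K] in sum_ds index_min.
  apply: no_colorful; exists set0, set0; split=> [|i].
    by split=> [|a b]; rewrite ?setI0 ?inE.
  by move/eqP: sum_ds (ds_gt0 i); rewrite sum_nat_eq0 => /forallP/(_ i)/eqP->.
have := index_min K (Z2_map_exists_of_small_levels proper_c small_level sum_ds).
by rewrite ltnn.
Qed.
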